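(* For every $\alpha\in(0,1)$, the function $\beta\mapsto 1/v(\beta)$ is convex on $(1,1/\alpha)$, where $v(\beta)$ is given by $$\frac1{v(\beta)}=\frac{\beta+1}{\beta-1}+\frac{1-\alpha}{1+\alpha}\left(\frac{\beta+3}{2(\beta-1)}+\frac{\beta(\beta+1)}{(\beta-1)^2}(s_+-s_-)+C\,s_-\right),$$ with $s_+=\frac{1-\alpha}{1-\alpha\beta}$, $s_-=\frac{1-\alpha}{1-\alpha/\beta}$, $C=\frac{2\beta}{\beta-1}-\frac{\beta-\alpha}{\beta-\alpha^2}$. Consequently $v$ is a unimodal function of $\beta$ on $(1,1/\alpha)$ (nondecreasing up to some $\beta_{\max}$ and nonincreasing thereafter), with $v(\beta)\to0$ as $\beta\downarrow1$ and as $\beta\uparrow1/\alpha$.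
   Context: Here $v(\beta)$ is the asymptotic speed of the biased random walk on the random spanning tree of the ladder graph with parameter $\alpha=c+1-\sqrt{c^2+2c}$, as given by the displayed formula for $\beta\in(1,1/\alpha)$. *)

From Stdlib Require Import Reals.
From Coquelicot Require Import Coquelicot.
Open Scope R_scope.

Definition s_plus (a b : R) : R := (1 - a) / (1 - a * b).
Definition s_minus (a b : R) : R := (1 - a) / (1 - a / b).
Definition Cst (a b : R) : R := 2 * b / (b - 1) - (b - a) / (b - a ^ 2).

Definition inv_speed (a b : R) : R :=
  (b + 1) / (b - 1)
  + (1 - a) / (1 + a) *
    ((b + 3) / (2 * (b - 1))
     + b * (b + 1) / (b - 1) ^ 2 * (s_plus a b - s_minus a b)
     + Cst a b * s_minus a b).

Definition speed (a b : R) : R := / inv_speed a b.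

(* On (1, 1/a) the function 1/v has the partial-fraction decomposition
   K + A/(b-1) + 1/(1-ab) - c1/(b-a) - c2/(b-a^2) with K, c1, c2 >= 0 and
   A > c1 + c2.  Each x |-> 1/(x-p) is convex on (p, oo) and its convexity gap
   grows with p, so the poles at a, a^2 < 1 are dominated by the pole at 1.
   Being convex and blowing up at both ends of the interval, 1/v attains its
   minimum at some bmax and is monotone on either side of it, while
   v <= (b-1)/(A-c1-c2) and v <= 1-ab give the limits at the endpoints. *)

From Pilot Require Import Defs.
From Stdlib Require Import Reals Lra Psatz.
From Coquelicot Require Import Coquelicot.
Open Scope R_scope.

Lemma convex_comb_gt p x y t :
  p < x -> p < y -> 0 <= t <= 1 -> p < t * x + (1 - t) * y.
Proof.
intros hx hy ht; destruct (Rle_lt_dec x y).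
- assert (0 <= (1 - t) * (y - x)) by nra; nra.
- assert (0 <= t * (x - y)) by nra; nra.
Qed.

Lemma convex_comb_lt p x y t :
  x < p -> y < p -> 0 <= t <= 1 -> t * x + (1 - t) * y < p.
Proof.
intros hx hy ht.
assert (- p < t * (- x) + (1 - t) * (- y)) by (apply convex_comb_gt; lra).
lra.
Qed.

Lemma filterlim_within_0 (h : R -> R) (P : R -> Prop) (p c del : R) :
  0 < c -> 0 < del ->
  (forall x, Rabs (x - p) < del -> P x -> Rabs (h x) <= c * Rabs (x - p)) ->
  filterlim h (within P (locally p)) (locally 0).
Proof.
intros hc hdel hh; apply filterlim_locally; intros eps.
assert (hr : 0 < Rmin del (eps / c)).
{ apply Rmin_glb_lt; [lra | apply Rdiv_lt_0_compat; [apply cond_pos | lra]]. }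
unfold within; exists (mkposreal _ hr); intros x hx hPx.
change (Rabs (x - p) < Rmin del (eps / c)) in hx.
change (Rabs (h x - 0) < eps); rewrite Rminus_0_r.
assert (hxd : Rabs (x - p) < del) by (pose proof (Rmin_l del (eps / c)); lra).
assert (hxe : c * Rabs (x - p) < eps).
{ pose proof (Rmin_r del (eps / c)).
  replace (pos eps) with (c * (eps / c)) by (field; lra).
  apply Rmult_lt_compat_l; lra. }
pose proof (hh x hxd hPx); lra.
Qed.

Section ConvexBlowUp.

Variables (lo hi D E : R) (f : R -> R).
Hypotheses (lo_lt_hi : lo < hi) (D_pos : 0 < D) (E_pos : 0 < E).
Hypothesis f_convex : forall x y t, lo < x < hi -> lo < y < hi -> 0 <= t <= 1 ->
  f (t * x + (1 - t) * y) <= t * f x + (1 - t) * f y.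
Hypothesis f_cont : forall x, lo < x < hi -> continuity_pt f x.
Hypothesis f_lo : forall x, lo < x < hi -> D <= f x * (x - lo).
Hypothesis f_hi : forall x, lo < x < hi -> E <= f x * (hi - x).

Lemma convex_pos x : lo < x < hi -> 0 < f x.
Proof. intros hx; pose proof (f_lo x hx); nra. Qed.

Lemma convex_le_max u v w : lo < u < hi -> lo < w < hi ->
  u <= v <= w -> f v <= Rmax (f u) (f w).
Proof.
intros hu hw hv.
destruct (Req_dec u w) as [<- | huw].
- replace v with u by lra; apply Rmax_l.
- set (t := (w - v) / (w - u)).
  assert (ht : 0 <= t <= 1).
  { assert (1 - t = (v - u) / (w - u)) by (unfold t; field; lra).
    assert (0 <= (v - u) / (w - u)) by (apply Rdiv_le_0_compat; lra).
    split; [unfold t; apply Rdiv_le_0_compat |]; lra. }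
  replace v with (t * u + (1 - t) * w) by (unfold t; field; lra).
  eapply Rle_trans; [apply f_convex; auto |].
  assert (t * f u <= t * Rmax (f u) (f w)) by (apply Rmult_le_compat_l, Rmax_l; lra).
  assert ((1 - t) * f w <= (1 - t) * Rmax (f u) (f w))
    by (apply Rmult_le_compat_l, Rmax_r; lra).
  lra.
Qed.

Lemma convex_gt_near_lo L x : 0 < L -> lo < x < hi -> x - lo < D / L -> L < f x.
Proof.
intros hL hx hxL; pose proof (f_lo x hx).
assert (L * (x - lo) < D).
{ replace D with (L * (D / L)) by (field; lra); apply Rmult_lt_compat_l; lra. }
nra.
Qed.

Lemma convex_gt_near_hi L x : 0 < L -> lo < x < hi -> hi - x < E / L -> L < f x.
Proof.
intros hL hx hxL; pose proof (f_hi x hx).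
assert (L * (hi - x) < E).
{ replace E with (L * (E / L)) by (field; lra); apply Rmult_lt_compat_l; lra. }
nra.
Qed.

Lemma convex_exists_min :
  exists M, lo < M < hi /\ forall x, lo < x < hi -> f M <= f x.
Proof.
set (m := (lo + hi) / 2).
assert (hm : lo < m < hi) by (unfold m; lra).
set (L := f m + 1).
assert (hL : 0 < L) by (pose proof (convex_pos m hm); unfold L; lra).
set (c := Rmin (lo + D / L) m); set (d := Rmax (hi - E / L) m).
assert (hDL : 0 < D / L) by (apply Rdiv_lt_0_compat; lra).
assert (hEL : 0 < E / L) by (apply Rdiv_lt_0_compat; lra).
assert (hc : lo < c <= m) by (unfold c; split; [apply Rmin_glb_lt | apply Rmin_r]; lra).
assert (hd : m <= d < hi) by (unfold d; split; [apply Rmax_r | apply Rmax_lub_lt]; lra).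
destruct (continuity_ab_min f c d) as (M & hmin & hM); [lra | |].
{ intros z hz; apply f_cont; lra. }
exists M; split; [lra |]; intros x hx.
assert (hMm : f M < L) by (assert (f M <= f m) by (apply hmin; lra); unfold L; lra).
destruct (Rlt_le_dec x c) as [hxc | hxc].
- assert (hcD : c <= lo + D / L) by apply Rmin_l.
  pose proof (convex_gt_near_lo L x hL hx); lra.
- destruct (Rle_lt_dec x d) as [hxd | hxd]; [apply hmin; lra |].
  assert (hdE : hi - E / L <= d) by apply Rmax_l.
  pose proof (convex_gt_near_hi L x hL hx); lra.
Qed.

Lemma convex_inv_unimodal :
  exists M, lo < M < hi /\
    (forall x y, lo < x -> x <= y -> y <= M -> / f x <= / f y) /\
    (forall x y, M <= x -> x <= y -> y < hi -> / f y <= / f x).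
Proof.
destruct convex_exists_min as (M & hM & hmin).
exists M; split; [exact hM | split]; intros x y hx hxy hy.
- apply Rinv_le_contravar; [apply convex_pos; lra |].
  rewrite <- (Rmax_left (f x) (f M)) by (apply hmin; lra).
  apply convex_le_max; lra.
- apply Rinv_le_contravar; [apply convex_pos; lra |].
  rewrite <- (Rmax_right (f M) (f y)) by (apply hmin; lra).
  apply convex_le_max; lra.
Qed.

Lemma inv_le_of_le_mul u v w : 0 < u -> 0 < w -> w <= u * v -> / u <= v / w.
Proof.
intros hu hw huv.
replace (/ u) with (w * / (u * w)) by (field; lra).
replace (v / w) with (u * v * / (u * w)) by (field; lra).
apply Rmult_le_compat_r; [left; apply Rinv_0_lt_compat; nra | lra].
Qed.

Lemma convex_inv_lim_lo : filterlim (fun x => / f x) (at_right lo) (locally 0).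
Proof.
apply (filterlim_within_0 _ _ lo (/ D) (hi - lo)); [apply Rinv_0_lt_compat; lra | lra |].
intros x hx hlo; rewrite Rabs_right in hx by lra.
assert (hx' : lo < x < hi) by lra.
rewrite Rabs_right by (left; apply Rinv_0_lt_compat, convex_pos, hx').
rewrite Rabs_right by lra.
rewrite Rmult_comm; apply inv_le_of_le_mul; [apply convex_pos | | apply f_lo]; auto.
Qed.

Lemma convex_inv_lim_hi : filterlim (fun x => / f x) (at_left hi) (locally 0).
Proof.
apply (filterlim_within_0 _ _ hi (/ E) (hi - lo)); [apply Rinv_0_lt_compat; lra | lra |].
intros x hx hhi; rewrite Rabs_left in hx by lra.
assert (hx' : lo < x < hi) by lra.
assert (hfx : 0 < f x) by (pose proof (f_hi x hx'); nra).
rewrite Rabs_right by (left; apply Rinv_0_lt_compat, hfx).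
rewrite Rabs_left by lra.
replace (/ E * - (x - hi)) with ((hi - x) / E) by (field; lra).
apply inv_le_of_le_mul; [exact hfx | | apply f_hi]; auto.
Qed.

End ConvexBlowUp.

Definition recip_gap (p x y t : R) : R :=
  t / (x - p) + (1 - t) / (y - p) - / (t * x + (1 - t) * y - p).

Lemma recip_gap_eq p x y t : p < x -> p < y -> 0 <= t <= 1 ->
  recip_gap p x y t
  = t * (1 - t) * (x - y) ^ 2 / ((x - p) * (y - p) * (t * x + (1 - t) * y - p)).
Proof.
intros hx hy ht; pose proof (convex_comb_gt p x y t hx hy ht).
unfold recip_gap; field; lra.
Qed.

Lemma recip_gap_mono p q x y t : q <= p -> p < x -> p < y -> 0 <= t <= 1 ->
  0 <= recip_gap q x y t <= recip_gap p x y t.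
Proof.
intros hqp hx hy ht; rewrite !recip_gap_eq by lra.
pose proof (convex_comb_gt p x y t hx hy ht).
assert (hnum : 0 <= t * (1 - t) * (x - y) ^ 2).
{ apply Rmult_le_pos; [apply Rmult_le_pos | apply pow2_ge_0]; lra. }
assert (hden : 0 < (x - p) * (y - p) * (t * x + (1 - t) * y - p)).
{ apply Rmult_lt_0_compat; [apply Rmult_lt_0_compat |]; lra. }
split.
- apply Rdiv_le_0_compat; [lra |].
  apply Rmult_lt_0_compat; [apply Rmult_lt_0_compat |]; lra.
- unfold Rdiv; apply Rmult_le_compat_l; [lra |].
  apply Rinv_le_contravar; [exact hden |].
  apply Rmult_le_compat; try lra.
  + apply Rmult_le_pos; lra.
  + apply Rmult_le_compat; lra.
Qed.

Lemma recip_gap_reflect a x y t : 0 < a -> a * x < 1 -> a * y < 1 -> 0 <= t <= 1 ->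
  t / (1 - a * x) + (1 - t) / (1 - a * y) - / (1 - a * (t * x + (1 - t) * y))
  = / a * recip_gap (- / a) (- x) (- y) t.
Proof.
intros ha hx hy ht.
assert (1 - a * (t * x + (1 - t) * y) > 0).
{ pose proof (convex_comb_lt 1 (a * x) (a * y) t hx hy ht); nra. }
assert (/ a - (t * x + (1 - t) * y) > 0).
{ replace (/ a - (t * x + (1 - t) * y)) with (/ a * (1 - a * (t * x + (1 - t) * y)))
    by (field; lra).
  apply Rmult_lt_0_compat; [apply Rinv_0_lt_compat |]; lra. }
assert (/ a - x > 0) by (replace (/ a - x) with (/ a * (1 - a * x)) by (field; lra);
  apply Rmult_lt_0_compat; [apply Rinv_0_lt_compat |]; lra).
assert (/ a - y > 0) by (replace (/ a - y) with (/ a * (1 - a * y)) by (field; lra);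
  apply Rmult_lt_0_compat; [apply Rinv_0_lt_compat |]; lra).
unfold recip_gap; field; repeat split; lra.
Qed.

Lemma mul_lt_1_of_lt_inv a b : 0 < a -> b < / a -> a * b < 1.
Proof.
intros ha hb; rewrite <- (Rinv_r a) by lra.
apply Rmult_lt_compat_l; lra.
Qed.

Definition pf_const (a : R) : R := 1 + (1 - a) / (2 * (1 + a)).
Definition pf_coef1 (a : R) : R := 2 + 4 / (1 + a).
Definition pf_coefa (a : R) : R := a ^ 2 * (3 - a) / (1 + a).
Definition pf_coefa2 (a : R) : R := a ^ 2 * (1 - a) ^ 2 / (1 + a).

Definition inv_speed_pf (a b : R) : R :=
  pf_const a + pf_coef1 a / (b - 1) + / (1 - a * b)
  - pf_coefa a / (b - a) - pf_coefa2 a / (b - a ^ 2).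

Lemma pf_coefs_sign a : 0 < a < 1 ->
  0 <= pf_const a /\ 0 <= pf_coefa a /\ 0 <= pf_coefa2 a
  /\ 0 < pf_coef1 a - pf_coefa a - pf_coefa2 a.
Proof.
intros ha; unfold pf_const, pf_coef1, pf_coefa, pf_coefa2.
repeat split.
- assert (0 <= (1 - a) / (2 * (1 + a))) by (apply Rdiv_le_0_compat; lra); lra.
- apply Rdiv_le_0_compat; [apply Rmult_le_pos; nra | lra].
- apply Rdiv_le_0_compat; [apply Rmult_le_pos; nra | lra].
- replace (2 + 4 / (1 + a) - a ^ 2 * (3 - a) / (1 + a) - a ^ 2 * (1 - a) ^ 2 / (1 + a))
    with ((6 + 2 * a - a ^ 2 * (3 - a) - a ^ 2 * (1 - a) ^ 2) / (1 + a)) by (field; lra).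
  apply Rdiv_lt_0_compat; nra.
Qed.

Lemma inv_speed_eq_pf a b : 0 < a < 1 -> 1 < b < / a -> inv_speed a b = inv_speed_pf a b.
Proof.
intros ha hb; pose proof (mul_lt_1_of_lt_inv a b (proj1 ha) (proj2 hb)).
assert (b - a ^ 2 > 0) by nra.
unfold inv_speed, inv_speed_pf, s_plus, s_minus, Defs.Cst, pf_const, pf_coef1, pf_coefa,
  pf_coefa2.
field; repeat split; nra.
Qed.

Lemma inv_speed_pf_convex a x y t : 0 < a < 1 -> 1 < x < / a -> 1 < y < / a -> 0 <= t <= 1 ->
  inv_speed_pf a (t * x + (1 - t) * y) <= t * inv_speed_pf a x + (1 - t) * inv_speed_pf a y.
Proof.
intros ha hx hy ht.
pose proof (mul_lt_1_of_lt_inv a x (proj1 ha) (proj2 hx)).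
pose proof (mul_lt_1_of_lt_inv a y (proj1 ha) (proj2 hy)).
destruct (pf_coefs_sign a ha) as (_ & hca & hca2 & hdom).
assert (hgap : t * inv_speed_pf a x + (1 - t) * inv_speed_pf a y
               - inv_speed_pf a (t * x + (1 - t) * y)
  = pf_coef1 a * recip_gap 1 x y t
    + (t / (1 - a * x) + (1 - t) / (1 - a * y) - / (1 - a * (t * x + (1 - t) * y)))
    - pf_coefa a * recip_gap a x y t - pf_coefa2 a * recip_gap (a ^ 2) x y t).
{ unfold inv_speed_pf, recip_gap, Rdiv; ring. }
rewrite recip_gap_reflect in hgap by lra.
destruct (recip_gap_mono 1 1 x y t) as [hg1 _]; try lra.
destruct (recip_gap_mono 1 a x y t) as [_ hga]; try lra.
destruct (recip_gap_mono 1 (a ^ 2) x y t) as [_ hga2]; try nra.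
destruct (recip_gap_mono (- / a) (- / a) (- x) (- y) t) as [hgr _]; try lra.
assert (0 <= / a * recip_gap (- / a) (- x) (- y) t)
  by (apply Rmult_le_pos; [left; apply Rinv_0_lt_compat |]; lra).
assert (pf_coefa a * recip_gap a x y t <= pf_coefa a * recip_gap 1 x y t)
  by (apply Rmult_le_compat_l; lra).
assert (pf_coefa2 a * recip_gap (a ^ 2) x y t <= pf_coefa2 a * recip_gap 1 x y t)
  by (apply Rmult_le_compat_l; lra).
assert (0 <= (pf_coef1 a - pf_coefa a - pf_coefa2 a) * recip_gap 1 x y t)
  by (apply Rmult_le_pos; lra).
lra.
Qed.

Lemma inv_speed_convex a : 0 < a < 1 ->
  forall x y t, 1 < x < / a -> 1 < y < / a -> 0 <= t <= 1 ->
    inv_speed a (t * x + (1 - t) * y) <= t * inv_speed a x + (1 - t) * inv_speed a y.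
Proof.
intros ha x y t hx hy ht.
assert (1 < t * x + (1 - t) * y < / a)
  by (split; [apply convex_comb_gt | apply convex_comb_lt]; lra).
rewrite !inv_speed_eq_pf by assumption.
apply inv_speed_pf_convex; assumption.
Qed.

Lemma inv_speed_continuous a (ha : 0 < a < 1) b : 1 < b < / a -> continuity_pt (inv_speed a) b.
Proof.
intros hb; pose proof (mul_lt_1_of_lt_inv a b (proj1 ha) (proj2 hb)).
assert (1 - a / b <> 0)
  by (replace (1 - a / b) with ((b - a) / b) by (field; lra);
      apply Rgt_not_eq, Rdiv_lt_0_compat; lra).
unfold inv_speed, s_plus, s_minus, Defs.Cst; reg; nra.
Qed.

Lemma inv_speed_ge a b : 0 < a < 1 -> 1 < b < / a ->
  pf_const a + (pf_coef1 a - pf_coefa a - pf_coefa2 a) / (b - 1) + / (1 - a * b)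
  <= inv_speed a b.
Proof.
intros ha hb; pose proof (mul_lt_1_of_lt_inv a b (proj1 ha) (proj2 hb)).
destruct (pf_coefs_sign a ha) as (_ & hca & hca2 & _).
rewrite inv_speed_eq_pf by assumption; unfold inv_speed_pf.
assert (pf_coefa a / (b - a) <= pf_coefa a / (b - 1)).
{ apply Rmult_le_compat_l; [lra | apply Rinv_le_contravar; lra]. }
assert (pf_coefa2 a / (b - a ^ 2) <= pf_coefa2 a / (b - 1)).
{ apply Rmult_le_compat_l; [lra | apply Rinv_le_contravar; nra]. }
unfold Rdiv in *; lra.
Qed.

Lemma inv_speed_lo_bound a (ha : 0 < a < 1) b : 1 < b < / a ->
  pf_coef1 a - pf_coefa a - pf_coefa2 a <= inv_speed a b * (b - 1).
Proof.
intros hb; pose proof (mul_lt_1_of_lt_inv a b (proj1 ha) (proj2 hb)).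
destruct (pf_coefs_sign a ha) as (hK & _ & _ & hD).
pose proof (inv_speed_ge a b ha hb).
assert (0 <= (pf_const a + / (1 - a * b)) * (b - 1)).
{ apply Rmult_le_pos; [assert (0 < / (1 - a * b)) by (apply Rinv_0_lt_compat; lra) |]; lra. }
assert ((pf_const a + (pf_coef1 a - pf_coefa a - pf_coefa2 a) / (b - 1) + / (1 - a * b))
        * (b - 1)
        = (pf_const a + / (1 - a * b)) * (b - 1) + (pf_coef1 a - pf_coefa a - pf_coefa2 a))
  by (field; lra).
nra.
Qed.

Lemma inv_speed_hi_bound a (ha : 0 < a < 1) b : 1 < b < / a -> / a <= inv_speed a b * (/ a - b).
Proof.
intros hb; pose proof (mul_lt_1_of_lt_inv a b (proj1 ha) (proj2 hb)).
destruct (pf_coefs_sign a ha) as (hK & _ & _ & hD).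
pose proof (inv_speed_ge a b ha hb).
assert (0 <= pf_const a + (pf_coef1 a - pf_coefa a - pf_coefa2 a) / (b - 1))
  by (assert (0 < (pf_coef1 a - pf_coefa a - pf_coefa2 a) / (b - 1))
        by (apply Rdiv_lt_0_compat; lra); lra).
assert (/ (1 - a * b) * (/ a - b) = / a) by (field; lra).
nra.
Qed.

Theorem mainTheorem2 (a : R) (ha : 0 < a < 1) :
  (forall x y t : R, 1 < x < / a -> 1 < y < / a -> 0 <= t <= 1 ->
     inv_speed a (t * x + (1 - t) * y)
       <= t * inv_speed a x + (1 - t) * inv_speed a y)
  /\
  (exists bmax : R, 1 < bmax < / a /\
     (forall x y : R, 1 < x -> x <= y -> y <= bmax -> speed a x <= speed a y) /\
     (forall x y : R, bmax <= x -> x <= y -> y < / a -> speed a y <= speed a x))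
  /\
  filterlim (speed a) (at_right 1) (locally 0)
  /\ filterlim (speed a) (at_left (/ a)) (locally 0).
Proof.
assert (h1a : 1 < / a) by (rewrite <- Rinv_1; apply Rinv_lt_contravar; lra).
assert (hD : 0 < pf_coef1 a - pf_coefa a - pf_coefa2 a) by apply (pf_coefs_sign a ha).
assert (hE : 0 < / a) by (apply Rinv_0_lt_compat; lra).
pose proof (inv_speed_convex a ha) as hconv.
pose proof (inv_speed_continuous a ha) as hcont.
pose proof (inv_speed_lo_bound a ha) as hlo.
pose proof (inv_speed_hi_bound a ha) as hhi.
split; [exact hconv | split; [| split]].
- exact (convex_inv_unimodal 1 (/ a) _ _ _ h1a hD hE hconv hcont hlo hhi).
- exact (convex_inv_lim_lo 1 (/ a) _ _ h1a hD hlo).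
- exact (convex_inv_lim_hi 1 (/ a) _ _ h1a hE hhi).
Qed.
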